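(* Let $\Omega\subseteq\mathbb R^m$ be a domain star-like with respect to the origin, and let $h=f_1+\underline x f_2$ in $\Omega$, where $f_1,f_2$ are left monogenic functions in $\Omega$ (so $h$ is harmonic). Then $\partial_{\underline x}h=-mf_2-2\mathrm E_{\underline x}f_2$, and $h$ is inframonogenic in $\Omega$ if and only if $mf_2+2\mathrm E_{\underline x}f_2$ is right monogenic in $\Omega$. In particular, if $h$ is an $\mathbb R_{0,m}$-valued homogeneous polynomial of degree $k\ge1$ on $\mathbb R^m$ which is both harmonic and inframonogenic, then $h=f_1+\underline x f_2$ where $f_1$ is a left monogenic homogeneous polynomial of degree $k$ and $f_2$ is a two-sided monogenic homogeneous polynomial of degree $k-1$.
   Context: $\mathbb R_{0,m}$ is the $2^m$-dimensional real Clifford algebra generated by the orthonormal basis $e_1,\dots,e_m$ of $\mathbb R^m$ with relations $e_je_k+e_ke_j=-2\delta_{jk}$. A point of $\mathbb R^m$ is identified with $\underline x=\sum_j x_je_j$. The Dirac operator $\partial_{\underline x}=\sum_j e_j\partial_{x_j}$ acts from the left, $\partial_{\underline x}f=\sum_j e_j\partial_{x_j}f$, or from the right, $f\partial_{\underline x}=\sum_j(\partial_{x_j}f)e_j$. Left (right) monogenic: $\partial_{\underline x}f=0$ ($f\partial_{\underline x}=0$); two-sided monogenic: both. $f\in\mathcal C^2$ is inframonogenic if $\partial_{\underline x}f\partial_{\underline x}=\sum_{i,j}e_i(\partial_{x_i}\partial_{x_j}f)e_j=0$. $\mathrm E_{\underline x}=\sum_j x_j\partial_{x_j}$ is the Euler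 operator. *)

From HB Require Import structures.
From Stdlib Require Import Reals ClassicalEpsilon.
From mathcomp Require Import all_boot.
Set Implicit Arguments. Unset Strict Implicit. Unset Printing Implicit Defensive.

Local Open Scope R_scope.

Lemma Rplus_assoc' : associative Rplus.
Proof. by move=> a b c; rewrite Rplus_assoc. Qed.
Lemma Rmult_assoc' : associative Rmult.
Proof. by move=> a b c; rewrite Rmult_assoc. Qed.
HB.instance Definition _ :=
  Monoid.isComLaw.Build R R0 Rplus Rplus_assoc' Rplus_comm Rplus_0_l.
HB.instance Definition _ :=
  Monoid.isComLaw.Build R R1 Rmult Rmult_assoc' Rmult_comm Rmult_1_l.

(* An element is given by its coordinates on the basis blades e_A, A ⊆ {0..m-1},
   where e_A = e_{a_1} ... e_{a_r} for a_1 < ... < a_r (e_∅ = 1). *)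
Definition Cl (m : nat) := {set 'I_m} -> R.

Definition cl_zero m : Cl m := fun _ => 0.
Definition cl_add m (a b : Cl m) : Cl m := fun A => a A + b A.
Definition cl_scale m (r : R) (a : Cl m) : Cl m := fun A => r * a A.

(* sign in e_A e_B = blade_sign A B * e_{A Δ B}, using e_j e_k + e_k e_j = -2 δ_jk *)
Definition blade_sign m (A B : {set 'I_m}) : R :=
  (-1) ^ (#|[set p : 'I_m * 'I_m | [&& p.1 \in A, p.2 \in B & (p.2 < p.1)%N]]|
          + #|A :&: B|).

Definition cl_mul m (a b : Cl m) : Cl m := fun C =>
  \big[Rplus/0]_(A : {set 'I_m})
    \big[Rplus/0]_(B : {set 'I_m} | (A :\: B) :|: (B :\: A) == C)
      (blade_sign A B * a A * b B).

Definition cl_e m (j : 'I_m) : Cl m := fun A => if A == [set j] then 1 else 0.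

Definition pt (m : nat) := 'I_m -> R.
Definition origin m : pt m := fun _ => 0.

Definition vec m (x : pt m) : Cl m := fun A =>
  \big[Rplus/0]_(j : 'I_m) (x j * cl_e j A).

Definition upd m (x : pt m) (j : 'I_m) (t : R) : pt m :=
  fun i => if i == j then t else x i.

Definition deriv_at (g : R -> R) (t : R) : R :=
  epsilon (inhabits 0) (fun l => derivable_pt_lim g t l).

Definition has_pd m (f : pt m -> Cl m) (j : 'I_m) (x : pt m) : Prop :=
  forall A, exists l, derivable_pt_lim (fun t => f (upd x j t) A) (x j) l.

Definition pd m (j : 'I_m) (f : pt m -> Cl m) : pt m -> Cl m :=
  fun x A => deriv_at (fun t => f (upd x j t) A) (x j).

Definition is_open m (U : pt m -> Prop) : Prop :=
  forall x, U x -> exists d, 0 < d /\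
    forall y : pt m, (forall i, Rabs (y i - x i) < d) -> U y.

Definition is_connected m (O : pt m -> Prop) : Prop :=
  (exists x, O x) /\
  forall U V : pt m -> Prop, is_open U -> is_open V ->
    (forall x, O x -> U x \/ V x) ->
    (forall x, O x -> U x -> V x -> False) ->
    (exists x, O x /\ U x) -> (exists x, O x /\ V x) -> False.

Definition is_domain m (O : pt m -> Prop) : Prop := is_open O /\ is_connected O.

Definition starlike0 m (O : pt m -> Prop) : Prop :=
  O (@origin m) /\
  forall x t, O x -> 0 <= t <= 1 -> O (fun i => t * x i).

Definition cont_on m (O : pt m -> Prop) (f : pt m -> Cl m) : Prop :=
  forall x, O x -> forall A, forall eps, 0 < eps -> exists d, 0 < d /\
    forall y, O y -> (forall i, Rabs (y i - x i) < d) -> Rabs (f y A - f x A) < eps.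

Fixpoint Ck m (k : nat) (O : pt m -> Prop) (f : pt m -> Cl m) : Prop :=
  match k with
  | 0%N => cont_on O f
  | k'.+1 => cont_on O f /\ (forall j x, O x -> has_pd f j x) /\
             (forall j, Ck k' O (pd j f))
  end.

Definition smooth_on m (O : pt m -> Prop) (f : pt m -> Cl m) : Prop :=
  forall k, Ck k O f.

Definition dirac_l m (f : pt m -> Cl m) (x : pt m) : Cl m := fun A =>
  \big[Rplus/0]_(j : 'I_m) cl_mul (cl_e j) (pd j f x) A.

Definition dirac_r m (f : pt m -> Cl m) (x : pt m) : Cl m := fun A =>
  \big[Rplus/0]_(j : 'I_m) cl_mul (pd j f x) (cl_e j) A.

Definition dirac_lr m (f : pt m -> Cl m) (x : pt m) : Cl m := fun A =>
  \big[Rplus/0]_(i : 'I_m) \big[Rplus/0]_(j : 'I_m)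
     cl_mul (cl_mul (cl_e i) (pd i (pd j f) x)) (cl_e j) A.

Definition laplace m (f : pt m -> Cl m) (x : pt m) : Cl m := fun A =>
  \big[Rplus/0]_(j : 'I_m) pd j (pd j f) x A.

Definition euler m (f : pt m -> Cl m) (x : pt m) : Cl m := fun A =>
  \big[Rplus/0]_(j : 'I_m) (x j * pd j f x A).

(* Monogenic functions are (automatically) real-analytic; we include smoothness
   in the definition. *)
Definition left_monogenic m (O : pt m -> Prop) (f : pt m -> Cl m) : Prop :=
  smooth_on O f /\ forall x, O x -> forall A, dirac_l f x A = 0.

Definition right_monogenic m (O : pt m -> Prop) (f : pt m -> Cl m) : Prop :=
  smooth_on O f /\ forall x, O x -> forall A, dirac_r f x A = 0.

Definition inframonogenic m (O : pt m -> Prop) (f : pt m -> Cl m) : Prop :=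
  Ck 2 O f /\ forall x, O x -> forall A, dirac_lr f x A = 0.

Definition harmonic m (O : pt m -> Prop) (f : pt m -> Cl m) : Prop :=
  Ck 2 O f /\ forall x, O x -> forall A, laplace f x A = 0.

Definition hom_poly_R m (k : nat) (g : pt m -> R) : Prop :=
  exists s : seq (R * ('I_m -> nat)),
    all (fun p => (\sum_(i : 'I_m) p.2 i)%N == k) s /\
    forall x, g x = \big[Rplus/0]_(p <- s) (p.1 * \big[Rmult/1]_(i : 'I_m) (x i ^ p.2 i)).

Definition hom_poly m (k : nat) (f : pt m -> Cl m) : Prop :=
  forall A, hom_poly_R k (fun x => f x A).

Definition whole_space m : pt m -> Prop := fun _ => True.

(* Left multiplication by a generator e_i acts on the blade coordinates of
   R_{0,m} as a signed permutation [emul i]; the Clifford relations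
   e_i e_j + e_j e_i = -2 δ_ij become [emul_anticomm].  From them and
   Schwarz's theorem on mixed partial derivatives we derive the calculus of
   the Dirac operator used throughout:
     ∂_x (x g) = - m g - 2 E_x g - x ∂_x g,      ∂_x ∂_x g = - Δ g,
     Δ (x g) = 2 ∂_x g + x Δ g,                  (∂_x g) ∂_x = ∂_x g ∂_x.
   Part 1: for left monogenic f1, f2 these give ∂_x h = - m f2 - 2 E_x f2 and
   Δ h = 0, and h is inframonogenic iff -∂_x h = m f2 + 2 E_x f2 is right
   monogenic.  Part 2: if h is a harmonic, inframonogenic homogeneous
   polynomial of degree k >= 1, Euler's identity E_x f = (k-1) f shows that
   f2 = - ∂_x h / (m + 2k - 2) and f1 = h - x f2 do the job (dimension m = 0
   being trivial). *)

From HB Require Import structures.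
From Stdlib Require Import Reals ClassicalEpsilon Lra FunctionalExtensionality.
From mathcomp Require Import all_boot.
Set Implicit Arguments. Unset Strict Implicit. Unset Printing Implicit Defensive.
Local Open Scope R_scope.

(* Multiplication distributes over the real sums [\big[Rplus/0]], so the
   generic bigop lemmas [big_distrr] / [big_distrl] apply to them. *)
HB.instance Definition _ := Monoid.isMulLaw.Build R 0 Rmult Rmult_0_l Rmult_0_r.
HB.instance Definition _ :=
  Monoid.isAddLaw.Build R Rmult Rplus Rmult_plus_distr_r Rmult_plus_distr_l.

Lemma big_Ropp (I : Type) (r : seq I) (P : pred I) (F : I -> R) :
  - (\big[Rplus/0]_(i <- r | P i) F i) = \big[Rplus/0]_(i <- r | P i) (- F i).
Proof. exact: (big_morph Ropp Ropp_plus_distr Ropp_0). Qed.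

Lemma big_Rconst n c : \big[Rplus/0]_(i < n) c = INR n * c.
Proof.
rewrite big_const_ord; elim: n => [|n IH] /=; first ring.
rewrite IH; case: n {IH} => [|n] /=; ring.
Qed.

Lemma INR_sum (I : Type) (r : seq I) (F : I -> nat) :
  INR (\sum_(i <- r) F i)%N = \big[Rplus/0]_(i <- r) INR (F i).
Proof.
elim: r => [|a r IH]; first by rewrite !big_nil.
by rewrite !big_cons -IH plus_INR.
Qed.

Section Clifford.
Variable m : nat.
Implicit Types (A B C D X : {set 'I_m}) (i j k : 'I_m) (a b : Cl m).

(* Symmetric difference of blades: e_A e_B is a multiple of e_(symdiff A B). *)
Definition symdiff A B : {set 'I_m} := (A :\: B) :|: (B :\: A).

Lemma in_symdiff A B y : (y \in symdiff A B) = (y \in A) (+) (y \in B).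
Proof. by rewrite /symdiff !inE; case: (y \in A); case: (y \in B). Qed.

Lemma symdiff_eq A B C : (symdiff A B == C) = (B == symdiff A C).
Proof.
apply/eqP/eqP => [<-|->]; apply/setP => y; rewrite !in_symdiff;
  by case: (y \in A); case: (y \in B) => //; case: (y \in C).
Qed.

Lemma symdiffK A C : symdiff A (symdiff A C) = C.
Proof. by apply/setP => y; rewrite !in_symdiff; case: (y \in A); case: (y \in C). Qed.

Lemma symdiffCA A B C : symdiff A (symdiff B C) = symdiff B (symdiff A C).
Proof.
by apply/setP => y; rewrite !in_symdiff; case: (y \in A); case: (y \in B); case: (y \in C).
Qed.

Lemma cl_mulE a b C :
  cl_mul a b C = \big[Rplus/0]_A (blade_sign A (symdiff A C) * a A * b (symdiff A C)).
Proof.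
rewrite /cl_mul; apply: eq_bigr => A _.
rewrite (eq_bigl (fun B => B == symdiff A C)); last by move=> B; rewrite -symdiff_eq.
by rewrite big_pred1_eq.
Qed.

(* Left multiplication by e_i is the signed permutation [emul i] of blade
   coordinates: toggle i in the blade, with sign (-1)^#{x in X | x <= i}. *)
Definition esign i X : R := (-1) ^ #|[set y in X | (y <= i)%N]|.
Definition emul i b : Cl m :=
  fun C => esign i (symdiff [set i] C) * b (symdiff [set i] C).

(* The sign of e_i e_X: e_i passes the generators of X below i, and meets
   e_i itself iff i is in X. *)
Lemma blade_sign1 i X : blade_sign [set i] X = esign i X.
Proof.
rewrite /blade_sign /esign; congr (_ ^ _).
have -> : [set p : 'I_m * 'I_m | [&& p.1 \in [set i], p.2 \in X & (p.2 < p.1)%N]]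
   = [set (i, y) | y in [set y in X | (y < i)%N]].
  apply/setP => -[u v]; rewrite !inE /=; apply/idP/imsetP.
    by case/and3P => /eqP -> vX vi; exists v => //; rewrite inE vX.
  by case=> y; rewrite inE => /andP [yX yi] [-> ->]; rewrite eqxx yX yi.
rewrite card_imset; last by move=> y1 y2 [].
have le_lt (y : 'I_m) : (y <= i)%N = (y == i) || (y < i)%N by rewrite leq_eqVlt val_eqE.
case iX: (i \in X).
  have -> : [set y in X | (y <= i)%N] = i |: [set y in X | (y < i)%N].
    by apply/setP => y; rewrite !inE le_lt; case: (y =P i) => [->|_] /=; rewrite ?iX.
  rewrite cardsU1 inE ltnn andbF /= addnC; congr (_ + _)%N.
  rewrite (_ : [set i] :&: X = [set i]) ?cards1 //.
  by apply/setP => y; rewrite !inE; case: (y =P i) => // ->.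
have -> : [set y in X | (y <= i)%N] = [set y in X | (y < i)%N].
  by apply/setP => y; rewrite !inE le_lt; case: (y =P i) => [->|_] //=; rewrite iX.
rewrite (_ : [set i] :&: X = set0) ?cards0 ?addn0 //.
by apply/setP => y; rewrite !inE; case: (y =P i) => // ->; rewrite iX.
Qed.

Lemma cl_mul_e i b C : cl_mul (cl_e i) b C = emul i b C.
Proof.
rewrite cl_mulE (bigD1 [set i]) //= big1 ?Rplus_0_r.
  by rewrite /cl_e eqxx blade_sign1 Rmult_1_r.
by move=> A /negPf HA; rewrite /cl_e HA Rmult_0_r Rmult_0_l.
Qed.

Lemma esign_toggle i j X :
  esign i (symdiff [set j] X) = (if (j <= i)%N then -1 else 1) * esign i X.
Proof.
rewrite /esign; case: (leqP j i) => ji; last first.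
  rewrite Rmult_1_l; congr (_ ^ _); apply: eq_card => y; rewrite !inE.
  case: (y =P j) => [->|_] /=; last by rewrite andbF.
  by rewrite (leqNgt j i) ji !andbF.
set S := [set y in X | (y <= i)%N].
have -> : [set y in symdiff [set j] X | (y <= i)%N] = symdiff [set j] S.
  apply/setP => y; rewrite !(inE, in_symdiff) /S ?inE.
  by case: (y =P j) => [->|_]; rewrite ?eqxx ?ji ?andbT.
case jS: (j \in S).
  have -> : symdiff [set j] S = S :\ j.
    by apply/setP => y; rewrite in_symdiff in_setD1 in_set1; case: (y =P j) => [->|_]; rewrite ?jS.
  by rewrite [in RHS](cardsD1 j) jS add1n /= -Rmult_assoc (_ : -1 * -1 = 1) ?Rmult_1_l //; lra.
have -> : symdiff [set j] S = j |: S.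
  by apply/setP => y; rewrite in_symdiff in_setU1 in_set1; case: (y =P j) => [->|_]; rewrite ?jS.
by rewrite cardsU1 jS add1n.
Qed.

Lemma emul_anticomm i j b C :
  emul i (emul j b) C + emul j (emul i b) C = (if i == j then -2 else 0) * b C.
Proof.
rewrite /emul symdiffCA !esign_toggle !leqnn.
case: (i =P j) => [<-|/eqP ne].
  have sq : esign i C * esign i C = 1.
    by rewrite -Rpow_mult_distr (_ : -1 * -1 = 1) ?pow1 //; lra.
  rewrite symdiffK leqnn; transitivity (-2 * (esign i C * esign i C) * b C); first ring.
  by rewrite sq; ring.
case: (leqP i j) => ij.
  have -> : (j <= i)%N = false.
    by apply/negbTE; rewrite -ltnNge ltn_neqAle ij andbT; apply: contra ne => /eqP/val_inj ->.
  lra.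
by rewrite (ltnW ij); lra.
Qed.

Lemma emul_sqr i b C : emul i (emul i b) C = - b C.
Proof. have := emul_anticomm i i b C; rewrite eqxx; lra. Qed.

Lemma emul_ext i b b' C : (forall D, b D = b' D) -> emul i b C = emul i b' C.
Proof. by move=> E; rewrite /emul E. Qed.
Lemma emul_sum1 i (J : Type) (r : seq J) (G : J -> Cl m) C :
  emul i (fun D => \big[Rplus/0]_(k <- r) G k D) C = \big[Rplus/0]_(k <- r) emul i (G k) C.
Proof. by rewrite /emul big_distrr. Qed.

Lemma cl_mul_suml (J : Type) (r : seq J) (c : J -> R) (G : J -> Cl m) b C :
  cl_mul (fun A => \big[Rplus/0]_(k <- r) (c k * G k A)) b C =
  \big[Rplus/0]_(k <- r) (c k * cl_mul (G k) b C).
Proof.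
rewrite cl_mulE.
under eq_bigr => A _ do rewrite big_distrr big_distrl.
rewrite exchange_big; apply: eq_bigr => k _.
rewrite cl_mulE big_distrr; apply: eq_bigr => A _ /=; ring.
Qed.

Lemma vec_mul (x : pt m) b C :
  cl_mul (vec x) b C = \big[Rplus/0]_k (x k * emul k b C).
Proof. by rewrite /vec cl_mul_suml; apply: eq_bigr => k _; rewrite cl_mul_e. Qed.

Lemma vec_mul0 (x : pt m) b C : (forall D, b D = 0) -> cl_mul (vec x) b C = 0.
Proof. by move=> b0; rewrite vec_mul big1 // => k _; rewrite /emul b0; ring. Qed.

(* The algebraic core of  ∂_x ∂_x = -Δ : for a symmetric family M,
   sum_(i,j) e_i e_j M_ij = - sum_i M_ii. *)
Lemma emul_sqr_sum (M : 'I_m -> 'I_m -> Cl m) C :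
  (forall i j D, M i j D = M j i D) ->
  \big[Rplus/0]_i \big[Rplus/0]_j emul i (emul j (M i j)) C =
  - \big[Rplus/0]_i M i i C.
Proof.
move=> Msym; set S := \big[Rplus/0]_i \big[Rplus/0]_j emul i (emul j (M i j)) C.
have S_swap : S = \big[Rplus/0]_i \big[Rplus/0]_j emul j (emul i (M i j)) C.
  rewrite /S exchange_big; apply: eq_bigr => i _; apply: eq_bigr => j _.
  by rewrite (_ : M j i = M i j) //; apply: functional_extensionality => D.
suff : S + S = -2 * \big[Rplus/0]_i M i i C by lra.
rewrite big_distrr {1}S_swap /S -big_split; apply: eq_bigr => i _ /=.
rewrite -big_split (bigD1 i) //= big1 ?Rplus_0_r; first by rewrite emul_anticomm eqxx.
by move=> j /negPf ne; rewrite emul_anticomm ne Rmult_0_l.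
Qed.

End Clifford.

Section PartialDerivatives.
Variable m : nat.
Implicit Types (x y : pt m) (i j k : 'I_m) (f g : pt m -> R) (O : pt m -> Prop).

Lemma upd_id x j : upd x j (x j) = x.
Proof. by apply: functional_extensionality => k; rewrite /upd; case: (k =P j) => [->|]. Qed.

Lemma upd_same x j t : upd x j t j = t.
Proof. by rewrite /upd eqxx. Qed.

Lemma upd_other x i j t : i != j -> upd x j t i = x i.
Proof. by move=> ne; rewrite /upd (negPf ne). Qed.

Lemma upd_upd x j s t : upd (upd x j s) j t = upd x j t.
Proof. by apply: functional_extensionality => k; rewrite /upd; case: (k =P j). Qed.

Lemma upd_comm i j x a b : i != j -> upd (upd x i a) j b = upd (upd x j b) i a.
Proof.
move=> ne; apply: functional_extensionality => k; rewrite /upd.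
by case: (k =P j) => [->|] //; rewrite eq_sym (negPf ne).
Qed.

(* It is a one-constructor wrapper
   around [derivable_pt_lim] so that it is never unfolded by unification. *)
Variant is_pd j g x l : Prop :=
  IsPd of derivable_pt_lim (fun t => g (upd x j t)) (x j) l.

Definition pdR j g x := deriv_at (fun t => g (upd x j t)) (x j).

Lemma is_pd_lim j g x l :
  is_pd j g x l -> derivable_pt_lim (fun t => g (upd x j t)) (x j) l.
Proof. by case. Qed.

Lemma is_pd_pdR j g x l : is_pd j g x l -> pdR j g x = l.
Proof.
move=> /is_pd_lim H; apply: (uniqueness_limite (fun t => g (upd x j t)) (x j)); last exact: H.
by apply: epsilon_spec; exists l.
Qed.

Lemma is_pd_ex j g x : (exists l, is_pd j g x l) -> is_pd j g x (pdR j g x).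
Proof. by case=> l H; rewrite (is_pd_pdR H). Qed.

Lemma is_pd_add j f g x l1 l2 : is_pd j f x l1 -> is_pd j g x l2 ->
  is_pd j (fun y => f y + g y) x (l1 + l2).
Proof. by move=> /is_pd_lim H1 /is_pd_lim H2; constructor; apply: derivable_pt_lim_plus. Qed.

Lemma is_pd_mul j f g x l1 l2 : is_pd j f x l1 -> is_pd j g x l2 ->
  is_pd j (fun y => f y * g y) x (l1 * g x + f x * l2).
Proof.
move=> /is_pd_lim H1 /is_pd_lim H2; constructor.
by have := derivable_pt_lim_mult _ _ _ _ _ H1 H2; rewrite /mult_fct upd_id.
Qed.

Lemma is_pd_const j c x : is_pd j (fun _ => c) x 0.
Proof. by constructor; apply: derivable_pt_lim_const. Qed.

Lemma is_pd_coord j i x : is_pd j (fun y => y i) x (if i == j then 1 else 0).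
Proof.
constructor; case: (i =P j) => [->|/eqP ne].
  rewrite (_ : (fun t => upd x j t j) = id); first exact: derivable_pt_lim_id.
  by apply: functional_extensionality => t; rewrite upd_same.
rewrite (_ : (fun t => upd x j t i) = fct_cte (x i)); first exact: derivable_pt_lim_const.
by apply: functional_extensionality => t; rewrite upd_other.
Qed.

Lemma is_pd_scal j c g x l : is_pd j g x l -> is_pd j (fun y => c * g y) x (c * l).
Proof. by move=> H; have := is_pd_mul (is_pd_const j c x) H; rewrite Rmult_0_l Rplus_0_l. Qed.

Lemma is_pd_sum (J : Type) (r : seq J) (P : pred J) j (F : J -> pt m -> R) (L : J -> R) x :
  (forall a, P a -> is_pd j (F a) x (L a)) ->
  is_pd j (fun y => \big[Rplus/0]_(a <- r | P a) F a y) x (\big[Rplus/0]_(a <- r | P a) L a).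
Proof.
move=> H; elim: r => [|a r IH].
  rewrite big_nil; under [fun y => _]functional_extensionality => y do rewrite big_nil.
  exact: is_pd_const.
rewrite big_cons; under [fun y => _]functional_extensionality => y do rewrite big_cons.
by case Pa: (P a); [apply: is_pd_add (H a Pa) IH | apply: IH].
Qed.

Lemma is_pd_local O j f g x l :
  is_open O -> O x -> (forall y, O y -> f y = g y) -> is_pd j g x l -> is_pd j f x l.
Proof.
move=> Oo Ox fg /is_pd_lim H; constructor => eps eps0.
have [d [d0 Hd]] := Oo x Ox; have [del Hdel] := H eps eps0.
have mp : 0 < Rmin del d by apply: Rmin_pos; [apply: cond_pos|].
exists (mkposreal _ mp) => h h0 /= hlt.
have inO t : Rabs (t - x j) < d -> O (upd x j t).
  move=> Ht; apply: Hd => k; rewrite /upd.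
  by case: (k =P j) => [->|_] //; rewrite Rminus_diag Rabs_R0.
have O0 : O (upd x j (x j)) by apply: inO; rewrite Rminus_diag Rabs_R0.
have Oh : O (upd x j (x j + h)).
  by apply: inO; rewrite (_ : x j + h - x j = h); [apply: Rlt_le_trans hlt (Rmin_r _ _) | ring].
rewrite !fg //; apply: Hdel => //; exact: Rlt_le_trans hlt (Rmin_l _ _).
Qed.

End PartialDerivatives.

Section SmoothnessClasses.
Variable m : nat.
Implicit Types (x y : pt m) (i j : 'I_m) (f g : pt m -> R) (O : pt m -> Prop).

Definition contR O g := forall x, O x -> forall eps, 0 < eps ->
  exists d, 0 < d /\
    forall y, O y -> (forall i, Rabs (y i - x i) < d) -> Rabs (g y - g x) < eps.

Lemma contR_const O c : contR O (fun _ => c).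
Proof.
by move=> x _ eps e0; exists 1; split; [lra|] => y _ _; rewrite Rminus_diag Rabs_R0.
Qed.

Lemma contR_coord O i : contR O (fun y => y i).
Proof. by move=> x _ eps e0; exists eps; split => // y _; apply. Qed.

Lemma contR_ext O f g : contR O f -> (forall y, O y -> f y = g y) -> contR O g.
Proof.
move=> Hf fg x Ox eps e0; have [d [d0 Hd]] := Hf x Ox eps e0.
by exists d; split => // y Oy Hy; rewrite -!fg //; apply: Hd.
Qed.

Lemma contR_add O f g : contR O f -> contR O g -> contR O (fun y => f y + g y).
Proof.
move=> Hf Hg x Ox eps e0; have e2 : 0 < eps / 2 by lra.
have [d1 [d10 H1]] := Hf x Ox _ e2; have [d2 [d20 H2]] := Hg x Ox _ e2.
exists (Rmin d1 d2); split => [|y Oy Hy]; first exact: Rmin_pos.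
have := H1 y Oy (fun i => Rlt_le_trans _ _ _ (Hy i) (Rmin_l _ _)).
have := H2 y Oy (fun i => Rlt_le_trans _ _ _ (Hy i) (Rmin_r _ _)).
have := Rabs_triang (f y - f x) (g y - g x).
rewrite (_ : f y - f x + (g y - g x) = f y + g y - (f x + g x)); [lra | ring].
Qed.

(* |fg' - fg| <= |f'| |g' - g| + |g| |f' - f|, with |f'| < |f| + 1 near x. *)
Lemma contR_mul O f g : contR O f -> contR O g -> contR O (fun y => f y * g y).
Proof.
move=> Hf Hg x Ox eps e0.
set a := Rabs (f x); set b := Rabs (g x).
have a0 : 0 <= a by apply: Rabs_pos.
have b0 : 0 <= b by apply: Rabs_pos.
have eg : 0 < eps / (2 * (a + 1)) by apply: Rdiv_lt_0_compat; lra.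
have ef : 0 < Rmin 1 (eps / (2 * (b + 1))).
  by apply: Rmin_pos; [lra | apply: Rdiv_lt_0_compat; lra].
have [d1 [d10 H1]] := Hf x Ox _ ef; have [d2 [d20 H2]] := Hg x Ox _ eg.
exists (Rmin d1 d2); split => [|y Oy Hy]; first exact: Rmin_pos.
have Df := H1 y Oy (fun i => Rlt_le_trans _ _ _ (Hy i) (Rmin_l _ _)).
have Dg := H2 y Oy (fun i => Rlt_le_trans _ _ _ (Hy i) (Rmin_r _ _)).
have Df1 := Rlt_le_trans _ _ _ Df (Rmin_l _ _).
have Df2 := Rlt_le_trans _ _ _ Df (Rmin_r _ _).
have fy : Rabs (f y) < a + 1.
  have := Rabs_triang (f y - f x) (f x).
  by rewrite (_ : f y - f x + f x = f y); [rewrite /a; lra | ring].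
rewrite (_ : f y * g y - f x * g x = f y * (g y - g x) + g x * (f y - f x)); last ring.
apply: Rle_lt_trans (Rabs_triang _ _) _; rewrite !Rabs_mult -/b.
have P1 : Rabs (f y) * Rabs (g y - g x) < eps / 2.
  have -> : eps / 2 = (a + 1) * (eps / (2 * (a + 1))) by field; lra.
  have := Rabs_pos (f y); have := Rabs_pos (g y - g x); nra.
have P2 : b * Rabs (f y - f x) <= eps / 2.
  have -> : eps / 2 = (b + 1) * (eps / (2 * (b + 1))) by field; lra.
  have := Rabs_pos (f y - f x); nra.
lra.
Qed.

Fixpoint CkR (k : nat) O g : Prop :=
  match k with
  | 0%N => contR O g
  | k'.+1 => contR O g /\ (forall j x, O x -> exists l, is_pd j g x l) /\
             (forall j, CkR k' O (pdR j g))
  end.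

Lemma Ck_CkR k O (F : pt m -> Cl m) : Ck k O F <-> forall C, CkR k O (fun y => F y C).
Proof.
elim: k F => [|k IH] F /=; first by split=> H C x Ox; apply: H.
split => [[Fc [Fd Fk]] C|H].
  split; first by move=> x Ox; apply: Fc.
  split; last by move=> j; apply: (IH (pd j F)).1.
  by move=> j x Ox; have [l Hl] := Fd j x Ox C; exists l; constructor.
split; first by move=> x Ox C; case: (H C) => Hc _; apply: Hc.
split; last by move=> j; apply/IH => C; case: (H C) => _ [_]; apply.
move=> j x Ox C; case: (H C) => _ [Hd _].
by have [l /is_pd_lim Hl] := Hd j x Ox; exists l.
Qed.

Lemma CkR_weaken k O g : CkR k.+1 O g -> CkR k O g.
Proof.
elim: k g => [|k IH] g /=; first by case.
by case=> Hc [Hd Hk]; split => //; split => // j; apply: IH.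
Qed.

Section OnOpen.
Variable O : pt m -> Prop.
Hypothesis O_open : is_open O.

Lemma CkR_ext k f g : CkR k O f -> (forall y, O y -> f y = g y) -> CkR k O g.
Proof.
elim: k f g => [|k IH] f g /=; first exact: contR_ext.
case=> Hc [Hd Hk] fg; split; first exact: contR_ext Hc fg.
have Dg j y : O y -> exists l, is_pd j g y l /\ pdR j f y = l.
  move=> Oy; have [l Hl] := Hd j y Oy; exists l; split; last exact: is_pd_pdR.
  by apply: (is_pd_local O_open Oy (g := f)) => // z Oz; rewrite fg.
split => [j x Ox|j]; first by have [l [Hl _]] := Dg j x Ox; exists l.
apply: IH (Hk j) _ => y Oy; have [l [Hl ->]] := Dg j y Oy.
by rewrite (is_pd_pdR Hl).
Qed.

Lemma CkR_const k c : CkR k O (fun _ => c).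
Proof.
elim: k c => [|k IH] c; first exact: contR_const.
split; first exact: contR_const.
split => [j x _|j]; first by exists 0; apply: is_pd_const.
by apply: CkR_ext (IH 0) _ => y _; rewrite (is_pd_pdR (is_pd_const j c y)).
Qed.

Lemma CkR_coord k i : CkR k O (fun y => y i).
Proof.
case: k => [|k] /=; first exact: contR_coord.
split; first exact: contR_coord.
split => [j x _|j]; first by eexists; apply: is_pd_coord.
apply: (CkR_ext (CkR_const k (if i == j then 1 else 0))) => y _.
by rewrite (is_pd_pdR (is_pd_coord j i y)).
Qed.

Lemma CkR_add k f g : CkR k O f -> CkR k O g -> CkR k O (fun y => f y + g y).
Proof.
elim: k f g => [|k IH] f g /=; first exact: contR_add.
case=> fc [fd fk] [gc [gd gk]]; split; first exact: contR_add.
split => [j x Ox|j].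
  by have [l1 H1] := fd j x Ox; have [l2 H2] := gd j x Ox; eexists; apply: is_pd_add H1 H2.
apply: CkR_ext (IH _ _ (fk j) (gk j)) _ => y Oy.
by rewrite (is_pd_pdR (is_pd_add (is_pd_ex (fd j y Oy)) (is_pd_ex (gd j y Oy)))).
Qed.

Lemma CkR_mul k f g : CkR k O f -> CkR k O g -> CkR k O (fun y => f y * g y).
Proof.
elim: k f g => [|k IH] f g /=; first exact: contR_mul.
move=> Hf Hg; have Hf' := CkR_weaken Hf; have Hg' := CkR_weaken Hg.
case: Hf => fc [fd fk]; case: Hg => gc [gd gk]; split; first exact: contR_mul.
split => [j x Ox|j].
  by have [l1 H1] := fd j x Ox; have [l2 H2] := gd j x Ox; eexists; apply: is_pd_mul H1 H2.
apply: CkR_ext (CkR_add (IH _ _ (fk j) Hg') (IH _ _ Hf' (gk j))) _ => y Oy.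
by rewrite (is_pd_pdR (is_pd_mul (is_pd_ex (fd j y Oy)) (is_pd_ex (gd j y Oy)))).
Qed.

Lemma CkR_sum k (J : Type) (r : seq J) (P : pred J) (F : J -> pt m -> R) :
  (forall a, P a -> CkR k O (F a)) ->
  CkR k O (fun y => \big[Rplus/0]_(a <- r | P a) F a y).
Proof.
move=> H; elim: r => [|a r IH].
  by apply: CkR_ext (CkR_const k 0) _ => y _; rewrite big_nil.
case Pa: (P a).
  by apply: CkR_ext (CkR_add (H a Pa) IH) _ => y _; rewrite big_cons Pa.
by apply: CkR_ext IH _ => y _; rewrite big_cons Pa.
Qed.

Lemma CkR_prod k (J : Type) (r : seq J) (F : J -> pt m -> R) :
  (forall a, CkR k O (F a)) -> CkR k O (fun y => \big[Rmult/1]_(a <- r) F a y).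
Proof.
move=> H; elim: r => [|a r IH].
  by apply: CkR_ext (CkR_const k 1) _ => y _; rewrite big_nil.
by apply: CkR_ext (CkR_mul (H a) IH) _ => y _; rewrite big_cons.
Qed.

Lemma CkR_pow k g n : CkR k O g -> CkR k O (fun y => g y ^ n).
Proof. by move=> H; elim: n => [|n IH] /=; [apply: CkR_const | apply: CkR_mul]. Qed.

End OnOpen.
End SmoothnessClasses.

Section MixedDifference.
Variable m : nat.
Variables (i j : 'I_m) (x : pt m).
Hypothesis ij : i != j.

Definition plane a b := upd (upd x i a) j b.

Lemma plane_i a b : plane a b i = a.
Proof. by rewrite /plane upd_other // upd_same. Qed.

Lemma plane_j a b : plane a b j = b.
Proof. by rewrite /plane upd_same. Qed.

Lemma plane_near a b e : x i <= a <= x i + e -> x j <= b <= x j + e ->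
  forall k, Rabs (plane a b k - x k) <= e.
Proof.
move=> Ha Hb k; rewrite /plane /upd.
case: (k =P j) => [->|_]; first by rewrite Rabs_right; lra.
case: (k =P i) => [->|_]; first by rewrite Rabs_right; lra.
by rewrite Rminus_diag Rabs_R0; lra.
Qed.

Lemma plane_derivable_i (g : pt m -> R) a b l :
  is_pd i g (plane a b) l -> derivable_pt_lim (fun t => g (plane t b)) a l.
Proof.
case; rewrite plane_i; congr derivable_pt_lim; apply: functional_extensionality => t.
by rewrite /plane -upd_comm // upd_upd.
Qed.

Lemma plane_derivable_j (g : pt m -> R) a b l :
  is_pd j g (plane a b) l -> derivable_pt_lim (fun t => g (plane a t)) b l.
Proof.
case; rewrite plane_j; congr derivable_pt_lim; apply: functional_extensionality => t.
by rewrite /plane upd_upd.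
Qed.

Definition mixed_diff (g : pt m -> R) e :=
  g (plane (x i + e) (x j + e)) - g (plane (x i + e) (x j))
  - g (plane (x i) (x j + e)) + g (plane (x i) (x j)).

(* Two applications of the mean value theorem, first in x_i then in x_j:
   the mixed difference is e^2 times ∂_j ∂_i g at a point of the square. *)
Lemma mixed_diff_mvt (O : pt m -> Prop) g e : 0 < e ->
  (forall a b, x i <= a <= x i + e -> x j <= b <= x j + e -> O (plane a b)) ->
  (forall y, O y -> is_pd i g y (pdR i g y)) ->
  (forall y, O y -> is_pd j (pdR i g) y (pdR j (pdR i g) y)) ->
  exists a b, x i < a < x i + e /\ x j < b < x j + e /\
    mixed_diff g e = pdR j (pdR i g) (plane a b) * (e * e).
Proof.
move=> e0 inO Dg Dgi.
have [a [Ea Ha]] : exists a,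
    mixed_diff g e = (pdR i g (plane a (x j + e)) - pdR i g (plane a (x j))) * (x i + e - x i)
    /\ x i < a < x i + e.
  have [a [Ea Ha]] := MVT_cor2 (fun a => g (plane a (x j + e)) - g (plane a (x j)))
      (fun a => pdR i g (plane a (x j + e)) - pdR i g (plane a (x j))) (x i) (x i + e)
      ltac:(lra) (fun c Hc => derivable_pt_lim_minus _ _ _ _ _
         (plane_derivable_i (Dg _ (inO c (x j + e) Hc ltac:(lra))))
         (plane_derivable_i (Dg _ (inO c (x j) Hc ltac:(lra))))).
  by exists a; split => //; rewrite -Ea /mixed_diff; ring.
have [b [Eb Hb]] := MVT_cor2 (fun b => pdR i g (plane a b)) (fun b => pdR j (pdR i g) (plane a b))
    (x j) (x j + e) ltac:(lra)
    (fun c Hc => plane_derivable_j (Dgi _ (inO a c ltac:(lra) Hc))).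
by exists a, b; do 2!split => //; rewrite Ea Eb; ring.
Qed.

End MixedDifference.

Lemma mixed_diff_swap m (i j : 'I_m) x g e :
  i != j -> mixed_diff j i x g e = mixed_diff i j x g e.
Proof.
move=> ij; have swap a b : plane j i x a b = plane i j x b a by rewrite /plane upd_comm // eq_sym.
by rewrite /mixed_diff !swap; ring.
Qed.

Lemma schwarz m (O : pt m -> Prop) g (i j : 'I_m) x :
  is_open O -> CkR 2 O g -> O x -> pdR i (pdR j g) x = pdR j (pdR i g) x.
Proof.
case: (i =P j) => [-> //|/eqP ij] Oo [_ [Dg Dk]] Ox.
have [_ [Dgi Dki]] := Dk i; have [_ [Dgj Dkj]] := Dk j.
apply: cond_eq => e e0; have e2 : 0 < e / 2 by lra.
have [del [del0 Hdel]] := Oo x Ox.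
have [d1 [d10 H1]] := Dki j x Ox _ e2; have [d2 [d20 H2]] := Dkj i x Ox _ e2.
set eps := Rmin del (Rmin d1 d2) / 2.
have eps0 : 0 < eps by apply: Rdiv_lt_0_compat; [repeat apply: Rmin_pos|]; lra.
have eps_small : eps < del /\ eps < d1 /\ eps < d2.
  have := Rmin_l del (Rmin d1 d2); have := Rmin_r del (Rmin d1 d2).
  have := Rmin_l d1 d2; have := Rmin_r d1 d2; rewrite /eps; lra.
have within k l a b d : x k <= a <= x k + eps -> x l <= b <= x l + eps -> eps < d ->
    forall n, Rabs (plane k l x a b n - x n) < d.
  by move=> Ha Hb ed n; apply: Rle_lt_trans (plane_near Ha Hb n) ed.
have inO k l a b : x k <= a <= x k + eps -> x l <= b <= x l + eps -> O (plane k l x a b).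
  by move=> Ha Hb; apply: Hdel; apply: within Ha Hb (proj1 eps_small).
have [a [b [Ha [Hb E1]]]] := mixed_diff_mvt (x := x) (g := g) ij eps0 (inO i j)
  (fun y Oy => is_pd_ex (Dg i y Oy)) (fun y Oy => is_pd_ex (Dgi j y Oy)).
have ji : j != i by rewrite eq_sym.
have [b' [a' [Hb' [Ha' E2]]]] := mixed_diff_mvt (x := x) (g := g) ji eps0 (inO j i)
  (fun y Oy => is_pd_ex (Dg j y Oy)) (fun y Oy => is_pd_ex (Dgj i y Oy)).
have square_pos : eps * eps <> 0 by nra.
have same : pdR j (pdR i g) (plane i j x a b) = pdR i (pdR j g) (plane j i x b' a').
  by apply: (Rmult_eq_reg_r (eps * eps)) => //; rewrite -E1 -E2 mixed_diff_swap.
have Ia : x i <= a <= x i + eps by lra.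
have Ib : x j <= b <= x j + eps by lra.
have Ia' : x i <= a' <= x i + eps by lra.
have Ib' : x j <= b' <= x j + eps by lra.
have C1 := H1 _ (inO i j a b Ia Ib) (within i j a b d1 Ia Ib (proj1 (proj2 eps_small))).
have C2 := H2 _ (inO j i b' a' Ib' Ia') (within j i b' a' d2 Ib' Ia' (proj2 (proj2 eps_small))).
rewrite same in C1.
have := Rabs_triang (pdR i (pdR j g) x - pdR i (pdR j g) (plane j i x b' a'))
                    (pdR i (pdR j g) (plane j i x b' a') - pdR j (pdR i g) x).
rewrite (_ : forall u v w : R, u - v + (v - w) = u - w); [|move=> *; ring].
rewrite Rabs_minus_sym in C2; lra.
Qed.

Section DiracCalculus.
Variable m : nat.
Implicit Types (x y : pt m) (F G g : pt m -> Cl m) (C D : {set 'I_m}) (O : pt m -> Prop).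

Definition has_pds F x := forall j D, exists l, is_pd j (fun y => F y D) x l.

Lemma pdE F j x C : pd j F x C = pdR j (fun y => F y C) x.
Proof. by []. Qed.

Lemma is_pd_pd F j x D : has_pds F x -> is_pd j (fun y => F y D) x (pd j F x D).
Proof. by move=> H; apply: is_pd_ex. Qed.

Lemma Ck_has_pds k O F x : Ck k.+1 O F -> O x -> has_pds F x.
Proof. by move=> /Ck_CkR H Ox j D; have /= [_ [Hd _]] := H D; apply: Hd. Qed.

Lemma Ck_pd k O F j : Ck k.+1 O F -> Ck k O (pd j F).
Proof. by move=> /= [_ [_]]; apply. Qed.

Lemma Ck2_has_pds2 O F x : Ck 2 O F -> O x -> forall i, has_pds (pd i F) x.
Proof. by move=> H Ox i; apply: Ck_has_pds Ox; apply: Ck_pd H. Qed.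

Lemma pd_comm O F x i j D :
  is_open O -> Ck 2 O F -> O x -> pd i (pd j F) x D = pd j (pd i F) x D.
Proof. by move=> Oo /Ck_CkR HF Ox; apply: (schwarz i j Oo (HF D) Ox). Qed.

Lemma pd_local O F G x j : is_open O -> O x ->
  (forall y, O y -> forall D, F y D = G y D) -> has_pds G x -> pd j F x = pd j G x.
Proof.
move=> Oo Ox FG HG; apply: functional_extensionality => D; rewrite pdE; apply: is_pd_pdR.
apply: (@is_pd_local m O j (fun y => F y D) (fun y => G y D)) => //; last exact: is_pd_pd.
by move=> y Oy; apply: FG.
Qed.

Lemma diracE F x C : dirac_l F x C = \big[Rplus/0]_i emul i (pd i F x) C.
Proof. by apply: eq_bigr => i _; rewrite cl_mul_e. Qed.

Lemma dirac_l_local O F G x C : is_open O -> O x ->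
  (forall y, O y -> forall D, F y D = G y D) -> has_pds G x -> dirac_l F x C = dirac_l G x C.
Proof. by move=> Oo Ox FG HG; apply: eq_bigr => j _; rewrite (pd_local j Oo Ox FG HG). Qed.

Lemma dirac_r_local O F G x C : is_open O -> O x ->
  (forall y, O y -> forall D, F y D = G y D) -> has_pds G x -> dirac_r F x C = dirac_r G x C.
Proof. by move=> Oo Ox FG HG; apply: eq_bigr => j _; rewrite (pd_local j Oo Ox FG HG). Qed.

Lemma is_pd_emul F i j x C : has_pds F x ->
  is_pd j (fun y => emul i (F y) C) x (emul i (pd j F x) C).
Proof. by move=> H; apply: is_pd_scal; apply: is_pd_pd. Qed.

Lemma is_pd_dirac g k x C : (forall i, has_pds (pd i g) x) ->
  is_pd k (fun y => dirac_l g y C) x (\big[Rplus/0]_i emul i (pd k (pd i g) x) C).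
Proof.
move=> H; rewrite (_ : (fun y => _) = fun y => \big[Rplus/0]_i emul i (pd i g y) C).
  by apply: is_pd_sum => i _; apply: is_pd_emul.
by apply: functional_extensionality => y; rewrite diracE.
Qed.

Lemma is_pd_vec_mul g j x C : has_pds g x ->
  is_pd j (fun y => cl_mul (vec y) (g y) C) x (emul j (g x) C + cl_mul (vec x) (pd j g x) C).
Proof.
move=> H; rewrite (_ : (fun y => _) = fun y => \big[Rplus/0]_k (y k * emul k (g y) C)); last first.
  by apply: functional_extensionality => y; rewrite vec_mul.
have -> : emul j (g x) C + cl_mul (vec x) (pd j g x) C =
   \big[Rplus/0]_k ((if k == j then 1 else 0) * emul k (g x) C + x k * emul k (pd j g x) C).
  rewrite big_split /= vec_mul; congr (_ + _).
  by rewrite (bigD1 j) //= eqxx Rmult_1_l big1 ?Rplus_0_r // => k /negPf ->; rewrite Rmult_0_l.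
apply: is_pd_sum => k _; apply: is_pd_mul; [exact: is_pd_coord | exact: is_pd_emul].
Qed.

Lemma has_pds_vec_mul g x : has_pds g x -> has_pds (fun y => cl_mul (vec y) (g y)) x.
Proof. by move=> H j D; eexists; apply: is_pd_vec_mul. Qed.

Lemma dirac_add F G x C : has_pds F x -> has_pds G x ->
  dirac_l (fun y D => F y D + G y D) x C = dirac_l F x C + dirac_l G x C.
Proof.
move=> HF HG; rewrite !diracE -big_split; apply: eq_bigr => i _ /=.
rewrite (@emul_ext m i _ (fun D => pd i F x D + pd i G x D) C); first by rewrite /emul; ring.
by move=> D; rewrite pdE; apply: is_pd_pdR; apply: is_pd_add; apply: is_pd_pd.
Qed.

Lemma dirac_scal F x a C : has_pds F x ->
  dirac_l (fun y D => a * F y D) x C = a * dirac_l F x C.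
Proof.
move=> HF; rewrite !diracE big_distrr; apply: eq_bigr => i _ /=.
rewrite (@emul_ext m i _ (fun D => a * pd i F x D) C); first by rewrite /emul; ring.
by move=> D; rewrite pdE; apply: is_pd_pdR; apply: is_pd_scal; apply: is_pd_pd.
Qed.

(* ∂_x (x g) = - m g - 2 E_x g - x ∂_x g, a consequence of e_i e_k + e_k e_i = -2 δ_ik. *)
Lemma dirac_vec_mul g x C : has_pds g x ->
  dirac_l (fun y => cl_mul (vec y) (g y)) x C =
  - INR m * g x C - 2 * euler g x C - cl_mul (vec x) (dirac_l g x) C.
Proof.
move=> H; rewrite diracE.
have Ei i : emul i (pd i (fun y => cl_mul (vec y) (g y)) x) C =
    - g x C + \big[Rplus/0]_k (x k * emul i (emul k (pd i g x)) C).
  rewrite (@emul_ext m i _ (fun D => emul i (g x) D +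
      \big[Rplus/0]_k (x k * emul k (pd i g x) D)) C); last first.
    by move=> D; rewrite pdE (is_pd_pdR (is_pd_vec_mul i D H)) vec_mul.
  rewrite {1}/emul Rmult_plus_distr_l -/(emul i (emul i (g x)) C) emul_sqr; congr (_ + _).
  by rewrite {1}/emul big_distrr; apply: eq_bigr => k _ /=; rewrite /emul; ring.
have anti i k : x k * emul i (emul k (pd i g x)) C =
     - (x k * emul k (emul i (pd i g x)) C) + x k * ((if i == k then -2 else 0) * pd i g x C).
  by have := emul_anticomm i k (pd i g x) C; nra.
rewrite (eq_bigr _ (fun i _ => Ei i)) big_split /= big_Rconst.
under eq_bigr => i _ do (under eq_bigr => k _ do rewrite anti; rewrite big_split).
rewrite big_split /=.
have -> : \big[Rplus/0]_i \big[Rplus/0]_k (x k * ((if i == k then -2 else 0) * pd i g x C))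
    = -2 * euler g x C.
  rewrite /euler big_distrr; apply: eq_bigr => i _ /=.
  rewrite (bigD1 i) //= eqxx big1 ?Rplus_0_r; first ring.
  by move=> k /negPf; rewrite eq_sym => ->; ring.
have -> : \big[Rplus/0]_i \big[Rplus/0]_k - (x k * emul k (emul i (pd i g x)) C)
    = - cl_mul (vec x) (dirac_l g x) C.
  rewrite vec_mul big_Ropp exchange_big; apply: eq_bigr => k _.
  rewrite -big_Ropp; congr (- _).
  rewrite (@emul_ext m k _ (fun D => \big[Rplus/0]_i emul i (pd i g x) D) C).
    by rewrite emul_sum1 big_distrr.
  by move=> D; rewrite diracE.
ring.
Qed.

End DiracCalculus.

Section SecondOrder.
Variable m : nat.
Variable O : pt m -> Prop.
Hypothesis O_open : is_open O.
Implicit Types (x y : pt m) (F G f g h : pt m -> Cl m) (C D : {set 'I_m}).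

Lemma Ck_add k F G : Ck k O F -> Ck k O G -> Ck k O (fun y D => F y D + G y D).
Proof.
move=> /Ck_CkR HF /Ck_CkR HG; apply/Ck_CkR => C.
by apply: (CkR_add O_open); [apply: HF | apply: HG].
Qed.

Lemma Ck_scal k a F : Ck k O F -> Ck k O (fun y D => a * F y D).
Proof.
move=> /Ck_CkR HF; apply/Ck_CkR => C.
by apply: (CkR_mul O_open); [apply: CkR_const | apply: HF].
Qed.

Lemma Ck_vec_mul k g : Ck k O g -> Ck k O (fun y => cl_mul (vec y) (g y)).
Proof.
move=> /Ck_CkR Hg; apply/Ck_CkR => C.
apply: (CkR_ext O_open (f := fun y => \big[Rplus/0]_i (y i * emul i (g y) C))); last first.
  by move=> y _; rewrite vec_mul.
apply: (CkR_sum O_open) => i _; apply: (CkR_mul O_open); first exact: CkR_coord.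
by apply: (CkR_mul O_open); [apply: CkR_const | apply: Hg].
Qed.

Lemma smooth_euler f : smooth_on O f -> smooth_on O (euler f).
Proof.
move=> Hf k; apply/Ck_CkR => C; apply: (CkR_sum O_open) => j _.
apply: (CkR_mul O_open); first exact: CkR_coord.
by have /Ck_CkR := Ck_pd j (Hf k.+1); apply.
Qed.

Lemma dirac_zero x C : dirac_l (fun _ _ => 0) x C = 0.
Proof.
rewrite diracE big1 // => i _; rewrite /emul.
by rewrite pdE (is_pd_pdR (is_pd_const i 0 x)) Rmult_0_r.
Qed.

(* ∂_x ∂_x g = - Δ g for g of class C^2 (Schwarz + Clifford relations). *)
Lemma dirac_dirac g x a C : Ck 2 O g -> O x ->
  dirac_l (fun y D => a * dirac_l g y D) x C = - a * laplace g x C.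
Proof.
move=> Hg Ox; have Dg := Ck2_has_pds2 Hg Ox.
rewrite dirac_scal; last by move=> j D; eexists; apply: is_pd_dirac.
rewrite diracE (eq_bigr (fun i => \big[Rplus/0]_j emul i (emul j (pd i (pd j g) x)) C)).
  have sym (i j : 'I_m) D : pd i (pd j g) x D = pd j (pd i g) x D.
    exact: (pd_comm i j D O_open Hg Ox).
  by rewrite (emul_sqr_sum C sym) /laplace Ropp_mult_distr_l_reverse Ropp_mult_distr_r_reverse.
move=> i _; rewrite -emul_sum1; apply: emul_ext => D.
by rewrite pdE (is_pd_pdR (is_pd_dirac i D Dg)).
Qed.

Lemma dirac_r_dirac_l g x a C : Ck 2 O g -> O x ->
  dirac_r (fun y D => a * dirac_l g y D) x C = a * dirac_lr g x C.
Proof.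
move=> Hg Ox; have Dg := Ck2_has_pds2 Hg Ox.
have pd_dirac j : pd j (fun y D => a * dirac_l g y D) x =
    fun D => \big[Rplus/0]_i (a * cl_mul (cl_e i) (pd i (pd j g) x) D).
  apply: functional_extensionality => D.
  rewrite pdE (is_pd_pdR (is_pd_scal a (is_pd_dirac j D Dg))) big_distrr.
  apply: eq_bigr => i _ /=; rewrite cl_mul_e; congr (_ * _).
  by apply: emul_ext => D'; exact: (pd_comm _ _ _ O_open Hg Ox).
rewrite /dirac_r /dirac_lr.
rewrite (eq_bigr _ (fun j _ => congr1 (fun b => cl_mul b (cl_e j) C) (pd_dirac j))).
under eq_bigr => j _ do rewrite cl_mul_suml.
by rewrite exchange_big big_distrr; apply: eq_bigr => i _ /=; rewrite big_distrr.
Qed.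

(* Left monogenic C^2 functions are harmonic: Δ f = - ∂_x ∂_x f = 0. *)
Lemma monogenic_harmonic f x C : Ck 2 O f ->
  (forall y, O y -> forall A, dirac_l f y A = 0) -> O x -> laplace f x C = 0.
Proof.
move=> Hf Df Ox; have := dirac_dirac 1 C Hf Ox.
rewrite (dirac_l_local (G := fun _ _ => 0) _ O_open Ox) ?dirac_zero; first lra.
  by move=> y Oy D; rewrite Df ?Rmult_0_r.
by move=> j D; exists 0; apply: is_pd_const.
Qed.

Lemma pd_add F G y j : has_pds F y -> has_pds G y ->
  pd j (fun z D => F z D + G z D) y = fun D => pd j F y D + pd j G y D.
Proof.
move=> HF HG; apply: functional_extensionality => D.
by rewrite pdE; apply: is_pd_pdR; apply: is_pd_add; apply: is_pd_pd.
Qed.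

Lemma laplace_add F G x C : Ck 2 O F -> Ck 2 O G -> O x ->
  laplace (fun y D => F y D + G y D) x C = laplace F x C + laplace G x C.
Proof.
move=> HF HG Ox; have DF := Ck2_has_pds2 HF Ox; have DG := Ck2_has_pds2 HG Ox.
rewrite /laplace -big_split; apply: eq_bigr => j _ /=.
rewrite (pd_local j O_open Ox (G := fun y D => pd j F y D + pd j G y D)).
- by rewrite pd_add.
- by move=> y Oy D; rewrite pd_add //; [apply: Ck_has_pds HF Oy | apply: Ck_has_pds HG Oy].
- by move=> i D; eexists; apply: is_pd_add; apply: is_pd_pd.
Qed.

Lemma pd2_vec_mul g x j C : Ck 2 O g -> O x ->
  pd j (pd j (fun y => cl_mul (vec y) (g y))) x C =
  2 * emul j (pd j g x) C + cl_mul (vec x) (pd j (pd j g) x) C.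
Proof.
move=> Hg Ox; have Dg := Ck2_has_pds2 Hg Ox.
rewrite (pd_local j O_open Ox (G := fun y D => emul j (g y) D + cl_mul (vec y) (pd j g y) D)).
- rewrite pdE (is_pd_pdR (is_pd_add (is_pd_emul j j C (Ck_has_pds Hg Ox))
                                    (is_pd_vec_mul j C (Dg j)))); ring.
- move=> y Oy D; rewrite pdE; apply: is_pd_pdR; apply: is_pd_vec_mul.
  exact: Ck_has_pds Hg Oy.
- move=> i D; eexists; apply: is_pd_add; first exact: is_pd_emul (Ck_has_pds Hg Ox).
  exact: is_pd_vec_mul.
Qed.

Lemma laplace_vec_mul g x C : Ck 2 O g -> O x ->
  laplace (fun y => cl_mul (vec y) (g y)) x C =
  2 * dirac_l g x C + cl_mul (vec x) (laplace g x) C.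
Proof.
move=> Hg Ox; rewrite /laplace (eq_bigr _ (fun j _ => pd2_vec_mul j C Hg Ox)) big_split /=.
rewrite diracE big_distrr; congr (_ + _).
rewrite vec_mul (eq_bigr _ (fun j _ => vec_mul x (pd j (pd j g) x) C)) exchange_big.
by apply: eq_bigr => k _; rewrite emul_sum1 big_distrr.
Qed.

End SecondOrder.

(* A C^2 function h is inframonogenic iff -∂_x h is right monogenic, because
   (∂_x h) ∂_x = ∂_x h ∂_x. *)
Lemma inframonogenic_iff_right_monogenic m (O : pt m -> Prop) (h F : pt m -> Cl m) :
  is_open O -> Ck 2 O h -> smooth_on O F ->
  (forall y, O y -> forall D, F y D = - dirac_l h y D) ->
  inframonogenic O h <-> right_monogenic O F.
Proof.
move=> Oo Hh SF FE.
have key x C : O x -> dirac_r F x C = - dirac_lr h x C.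
  move=> Ox; rewrite (dirac_r_local (G := fun y D => -1 * dirac_l h y D) _ Oo Ox).
  - by rewrite (dirac_r_dirac_l Oo _ _ Hh Ox); ring.
  - by move=> y Oy D; rewrite FE //; ring.
  - by move=> j D; eexists; apply: is_pd_scal; apply: is_pd_dirac; exact: Ck2_has_pds2 Hh Ox.
split => [[_ Hi]|[_ Hr]]; split => // x Ox A.
  by rewrite key // Hi // Ropp_0.
by have := key x A Ox; rewrite Hr //; lra.
Qed.

Section AlmansiPair.
Variable m : nat.
Variable O : pt m -> Prop.
Hypothesis O_open : is_open O.
Variables f1 f2 : pt m -> Cl m.
Hypotheses (mono1 : left_monogenic O f1) (mono2 : left_monogenic O f2).

Let h := fun x => cl_add (f1 x) (cl_mul (vec x) (f2 x)).

Lemma smooth_almansi : smooth_on O h.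
Proof.
move=> k; apply: (Ck_add O_open); first exact: mono1.1.
exact: (Ck_vec_mul O_open (mono2.1 k)).
Qed.

Lemma dirac_almansi x C : O x -> dirac_l h x C = - INR m * f2 x C - 2 * euler f2 x C.
Proof.
move=> Ox; have D2 := Ck_has_pds (mono2.1 1%N) Ox.
rewrite (dirac_add C (Ck_has_pds (mono1.1 1%N) Ox) (has_pds_vec_mul D2)).
rewrite mono1.2 // dirac_vec_mul // vec_mul0; first ring.
by move=> D; apply: mono2.2.
Qed.

(* Δ (f1 + x f2) = Δ f1 + 2 ∂_x f2 + x Δ f2 = 0. *)
Lemma harmonic_almansi : harmonic O h.
Proof.
split; first exact: smooth_almansi.
move=> x Ox C; have S1 := mono1.1 2%N; have S2 := mono2.1 2%N.
rewrite (laplace_add O_open) //; last exact: (Ck_vec_mul O_open S2).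
rewrite (laplace_vec_mul O_open C S2 Ox) (monogenic_harmonic O_open C S1 mono1.2 Ox) mono2.2 //.
by rewrite vec_mul0 => [|D]; [ring | apply: monogenic_harmonic mono2.2 Ox].
Qed.

End AlmansiPair.

Section HomogeneousPolynomials.
Variable m : nat.
Implicit Types (x y : pt m) (f g : pt m -> R) (a : 'I_m -> nat) (s : seq (R * ('I_m -> nat))).

Definition mono a x := \big[Rmult/1]_i (x i ^ a i).
Definition decr a j := fun i => if i == j then (a i).-1 else a i.
Definition incr a j := fun i => if i == j then (a i).+1 else a i.

Definition all_deg k s := all (fun p => (\sum_i p.2 i)%N == k) s.

Lemma whole_space_open : is_open (@whole_space m).
Proof. by move=> x _; exists 1; split => //; lra. Qed.

Lemma hom_polyP k g : hom_poly_R k g <->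
  exists s, all_deg k s /\ g = fun x => \big[Rplus/0]_(p <- s) (p.1 * mono p.2 x).
Proof.
split=> [[s [Hs E]]|[s [Hs ->]]]; exists s; split => //.
exact: functional_extensionality.
Qed.

Lemma hom_poly_smooth k g n : hom_poly_R k g -> CkR n (@whole_space m) g.
Proof.
have W := whole_space_open.
case/hom_polyP => s [_ ->]; apply: (CkR_sum W) => p _.
apply: (CkR_mul W); first exact: CkR_const.
apply: (CkR_prod W) => i; apply: (CkR_pow W); exact: CkR_coord.
Qed.

Lemma hom_poly_ext k f g : hom_poly_R k f -> (forall x, f x = g x) -> hom_poly_R k g.
Proof. by case=> s [Hs E] fg; exists s; split => // x; rewrite -fg. Qed.

Lemma hom_poly0 k : hom_poly_R k (fun _ : pt m => 0).
Proof. by exists [::]; split => // x; rewrite big_nil. Qed.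

Lemma hom_poly_add k f g :
  hom_poly_R k f -> hom_poly_R k g -> hom_poly_R k (fun x => f x + g x).
Proof.
case=> s [Hs E] [t [Ht E']]; exists (s ++ t); split; first by rewrite all_cat Hs Ht.
by move=> x; rewrite big_cat E E'.
Qed.

Lemma hom_poly_scal k c g : hom_poly_R k g -> hom_poly_R k (fun x => c * g x).
Proof.
case=> s [Hs E]; exists [seq (c * p.1, p.2) | p <- s]; split; first by rewrite /all_deg all_map.
by move=> x; rewrite E big_map big_distrr; apply: eq_bigr => p _ /=; ring.
Qed.

Lemma hom_poly_sum k (I : Type) (r : seq I) (F : I -> pt m -> R) :
  (forall i, hom_poly_R k (F i)) -> hom_poly_R k (fun x => \big[Rplus/0]_(i <- r) F i x).
Proof.
move=> H; elim: r => [|a r IH].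
  by apply: hom_poly_ext (hom_poly0 k) _ => x; rewrite big_nil.
by apply: hom_poly_ext (hom_poly_add (H a) IH) _ => x; rewrite big_cons.
Qed.

Lemma mono_split a j x :
  mono a x = x j ^ a j * \big[Rmult/1]_(i | i != j) (x i ^ a i).
Proof. by rewrite /mono (bigD1 j). Qed.

Lemma mono_decr a j x :
  mono (decr a j) x = x j ^ (a j).-1 * \big[Rmult/1]_(i | i != j) (x i ^ a i).
Proof.
rewrite (mono_split _ j) /decr eqxx; congr (_ * _).
by apply: eq_bigr => i /negPf ->.
Qed.

Lemma mono_incr a j x : mono (incr a j) x = x j * mono a x.
Proof.
rewrite !(mono_split _ j) /incr eqxx /= Rmult_assoc; congr (_ * (_ * _)).
by apply: eq_bigr => i /negPf ->.
Qed.

Lemma is_pd_mono a j x : is_pd j (mono a) x (INR (a j) * mono (decr a j) x).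
Proof.
constructor; set c := \big[Rmult/1]_(i | i != j) (x i ^ a i).
rewrite (_ : (fun t => mono a (upd x j t)) = fun t => t ^ a j * c); last first.
  apply: functional_extensionality => t; rewrite (mono_split _ j) upd_same /c.
  by congr (_ * _); apply: eq_bigr => i ne; rewrite upd_other.
have := derivable_pt_lim_mult _ _ (x j) _ _ (derivable_pt_lim_pow (x j) (a j))
  (derivable_pt_lim_const c (x j)).
by rewrite /mult_fct /fct_cte mono_decr -/c Rmult_0_r Rplus_0_r Rmult_assoc.
Qed.

Lemma coord_pd_mono a j x : x j * (INR (a j) * mono (decr a j) x) = INR (a j) * mono a x.
Proof.
rewrite mono_decr (mono_split a j); case: (a j) => [|n]; first by rewrite /=; ring.
rewrite -pred_Sn -tech_pow_Rmult.
by move: (INR _) (x j ^ n) (\big[Rmult/1]_(i | i != j) _) => c p q; ring.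
Qed.

Lemma pdR_poly s j x :
  pdR j (fun x => \big[Rplus/0]_(p <- s) (p.1 * mono p.2 x)) x =
  \big[Rplus/0]_(p <- s) (p.1 * (INR (p.2 j) * mono (decr p.2 j) x)).
Proof. by apply: is_pd_pdR; apply: is_pd_sum => p _; apply: is_pd_scal; apply: is_pd_mono. Qed.

Lemma hom_poly_pd k g j : hom_poly_R k g -> hom_poly_R k.-1 (pdR j g).
Proof.
case/hom_polyP => s [Hs ->].
exists [seq (p.1 * INR (p.2 j), decr p.2 j) | p <- s & (0 < p.2 j)%N]; split.
  rewrite /all_deg all_map all_filter; apply: sub_all Hs => p /eqP <- /=.
  apply/implyP => pj; apply/eqP; rewrite (bigD1 j) //= [in RHS](bigD1 j) //= /decr eqxx.
  rewrite (eq_bigr (fun i => p.2 i)) => [|i /negPf -> //].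
  by rewrite -{2}(prednK pj).
move=> x; rewrite pdR_poly big_map big_filter [RHS]big_mkcond.
apply: eq_bigr => p _ /=; case: (p.2 j) => [|n] /=; first by rewrite Rmult_0_l Rmult_0_r.
by rewrite Rmult_assoc.
Qed.

Lemma hom_poly_coord k g j : hom_poly_R k g -> hom_poly_R k.+1 (fun x => x j * g x).
Proof.
case/hom_polyP => s [Hs ->]; exists [seq (p.1, incr p.2 j) | p <- s]; split.
  rewrite /all_deg all_map; apply: sub_all Hs => p /eqP <- /=.
  apply/eqP; rewrite (bigD1 j) //= [in RHS](bigD1 j) //= /incr eqxx addSn.
  by rewrite (eq_bigr (fun i => p.2 i)) => [|i /negPf ->].
move=> x; rewrite big_map big_distrr; apply: eq_bigr => p _ /=.
by rewrite -[\big[Rmult/1]_i _]/(mono (incr p.2 j) x) mono_incr; ring.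
Qed.

Lemma hom_poly_euler k g x : hom_poly_R k g ->
  \big[Rplus/0]_j (x j * pdR j g x) = INR k * g x.
Proof.
case/hom_polyP => s [Hs ->].
under eq_bigr => j _ do rewrite pdR_poly big_distrr.
rewrite exchange_big big_distrr /=.
elim: s Hs => [|p s IH /andP [/eqP deg Hs]]; first by rewrite !big_nil.
rewrite !big_cons IH //; congr (_ + _).
rewrite -deg INR_sum big_distrl; apply: eq_bigr => j _ /=.
by rewrite -Rmult_assoc (Rmult_comm (x j)) Rmult_assoc coord_pd_mono; ring.
Qed.

End HomogeneousPolynomials.

Section CliffordPolynomials.
Variable m : nat.
Implicit Types (x y : pt m) (F g h : pt m -> Cl m).

Lemma hom_poly_smooth_on k F : hom_poly k F -> smooth_on (@whole_space m) F.
Proof. by move=> HF n; apply/Ck_CkR => C; apply: hom_poly_smooth (HF C). Qed.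

Lemma hom_poly_dirac k a h : hom_poly k h -> hom_poly k.-1 (fun y D => a * dirac_l h y D).
Proof.
move=> Hh A; apply: hom_poly_scal; apply: (hom_poly_ext (f := fun y =>
  \big[Rplus/0]_j (esign j (symdiff [set j] A) * pdR j (fun z => h z (symdiff [set j] A)) y))).
  by apply: hom_poly_sum => j; apply: hom_poly_scal; apply: hom_poly_pd.
by move=> y; rewrite diracE.
Qed.

Lemma hom_poly_vec_mul k g : hom_poly k g -> hom_poly k.+1 (fun y => cl_mul (vec y) (g y)).
Proof.
move=> Hg A; apply: (hom_poly_ext (f := fun y => \big[Rplus/0]_j (y j * emul j (g y) A))).
  by apply: hom_poly_sum => j; apply: hom_poly_coord; apply: hom_poly_scal.
by move=> y; rewrite vec_mul.
Qed.

Lemma euler_hom_poly k g x C : hom_poly k g -> euler g x C = INR k * g x C.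
Proof. by move=> Hg; apply: (hom_poly_euler x (Hg C)). Qed.

End CliffordPolynomials.

(* In dimension 0 there is nothing to differentiate: take f1 = h, f2 = 0. *)
Lemma decomposition_dim0 k (h : pt 0 -> Cl 0) : hom_poly k h ->
  exists f1 f2 : pt 0 -> Cl 0,
    hom_poly k f1 /\ left_monogenic (@whole_space 0) f1 /\
    hom_poly k.-1 f2 /\ left_monogenic (@whole_space 0) f2 /\
    right_monogenic (@whole_space 0) f2 /\
    forall x A, h x A = cl_add (f1 x) (cl_mul (vec x) (f2 x)) A.
Proof.
move=> Hh; have H0 : hom_poly k.-1 (fun (_ : pt 0) (_ : {set 'I_0}) => 0).
  by move=> A; apply: hom_poly0.
have S0 := hom_poly_smooth_on H0.
exists h, (fun _ _ => 0); do !split => //.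
- exact: hom_poly_smooth_on Hh.
- by move=> x _ A; rewrite /dirac_l big_ord0.
- by move=> x _ A; rewrite /dirac_l big_ord0.
- by move=> x _ A; rewrite /dirac_r big_ord0.
- by move=> x A; rewrite /cl_add vec_mul0 //; ring.
Qed.

Section HomogeneousDecomposition.
Variables (m k : nat) (h : pt m -> Cl m).
Hypotheses (k_pos : (1 <= k)%N) (hom_h : hom_poly k h)
  (harm_h : harmonic (@whole_space m) h) (infra_h : inframonogenic (@whole_space m) h).

(* c = m + 2(k-1) is the constant in ∂_x (x f2) = -c f2 for f2 of degree k-1. *)
Let c := INR m + 2 * (INR k - 1).
Hypothesis c_neq0 : c <> 0.

Let f2 := fun y D => - / c * dirac_l h y D.
Let f1 := fun y D => h y D + -1 * cl_mul (vec y) (f2 y) D.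

Let W := @whole_space_open m.
Let smooth_h := hom_poly_smooth_on hom_h.

Lemma hom_f2 : hom_poly k.-1 f2.
Proof. exact: hom_poly_dirac. Qed.

Lemma hom_f1 : hom_poly k f1.
Proof.
move=> A; apply: hom_poly_add (hom_h A) _; apply: hom_poly_scal.
by have := hom_poly_vec_mul hom_f2 A; rewrite prednK.
Qed.

(* ∂_x f2 = Δ h / c = 0. *)
Lemma left_monogenic_f2 : left_monogenic (@whole_space m) f2.
Proof.
split; first exact: hom_poly_smooth_on hom_f2.
by move=> x _ A; rewrite /f2 (dirac_dirac W _ _ (smooth_h 2%N) I) harm_h.2 //; ring.
Qed.

(* f2 ∂_x = - ∂_x h ∂_x / c = 0. *)
Lemma right_monogenic_f2 : right_monogenic (@whole_space m) f2.
Proof.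
split; first exact: hom_poly_smooth_on hom_f2.
by move=> x _ A; rewrite /f2 (dirac_r_dirac_l W _ _ (smooth_h 2%N) I) infra_h.2 //; ring.
Qed.

(* ∂_x f1 = ∂_x h + (m + 2 E_x) f2 = ∂_x h + c f2 = 0. *)
Lemma left_monogenic_f1 : left_monogenic (@whole_space m) f1.
Proof.
split; first exact: hom_poly_smooth_on hom_f1.
move=> x _ C; have D2 y : has_pds f2 y := Ck_has_pds (left_monogenic_f2.1 1%N) I.
rewrite dirac_add; last 2 first.
- exact: Ck_has_pds (smooth_h 1%N) I.
- by move=> j D; eexists; apply: is_pd_scal; apply: is_pd_vec_mul.
rewrite dirac_scal; last exact: has_pds_vec_mul.
rewrite dirac_vec_mul // vec_mul0 => [|D]; last exact: left_monogenic_f2.2.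
rewrite (euler_hom_poly x C hom_f2) (_ : INR k.-1 = INR k - 1).
  by rewrite /f2 /c; field.
by rewrite -{2}(prednK k_pos) S_INR; ring.
Qed.

Lemma decomposition_h x A : h x A = cl_add (f1 x) (cl_mul (vec x) (f2 x)) A.
Proof. by rewrite /cl_add /f1; ring. Qed.

Lemma homogeneous_decomposition_ex :
  exists f1 f2 : pt m -> Cl m,
    hom_poly k f1 /\ left_monogenic (@whole_space m) f1 /\
    hom_poly k.-1 f2 /\ left_monogenic (@whole_space m) f2 /\
    right_monogenic (@whole_space m) f2 /\
    forall x A, h x A = cl_add (f1 x) (cl_mul (vec x) (f2 x)) A.
Proof.
exists f1, f2; split; first exact: hom_f1.
split; first exact: left_monogenic_f1.
split; first exact: hom_f2.
split; first exact: left_monogenic_f2.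
by split; [exact: right_monogenic_f2 | exact: decomposition_h].
Qed.

End HomogeneousDecomposition.

Theorem mainTheorem7 (m : nat) :
  (forall (O : pt m -> Prop) (f1 f2 : pt m -> Cl m),
     is_domain O -> starlike0 O ->
     left_monogenic O f1 -> left_monogenic O f2 ->
     let h := fun x => cl_add (f1 x) (cl_mul (vec x) (f2 x)) in
     harmonic O h /\
     (forall x, O x -> forall A,
        dirac_l h x A = - INR m * f2 x A - 2 * euler f2 x A) /\
     (inframonogenic O h <->
      right_monogenic O (fun x A => INR m * f2 x A + 2 * euler f2 x A)))
  /\
  (forall (k : nat) (h : pt m -> Cl m),
     (1 <= k)%N -> hom_poly k h ->
     harmonic (@whole_space m) h -> inframonogenic (@whole_space m) h ->
     exists f1 f2 : pt m -> Cl m,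
       hom_poly k f1 /\ left_monogenic (@whole_space m) f1 /\
       hom_poly k.-1 f2 /\ left_monogenic (@whole_space m) f2 /\
       right_monogenic (@whole_space m) f2 /\
       forall x A, h x A = cl_add (f1 x) (cl_mul (vec x) (f2 x)) A).
Proof.
split=> [O f1 f2 [Oo _] _ mono1 mono2 h | k h k_pos hom_h harm_h infra_h].
  have dirac_h x : O x -> forall A, dirac_l h x A = - INR m * f2 x A - 2 * euler f2 x A.
    by move=> Ox A; exact: (dirac_almansi mono1 mono2 A Ox).
  have smooth_F : smooth_on O (fun x A => INR m * f2 x A + 2 * euler f2 x A).
    move=> n; apply: (Ck_add Oo); apply: (Ck_scal Oo); first exact: mono2.1.
    exact: (smooth_euler Oo mono2.1).
  have F_dirac y : O y -> forall D, INR m * f2 y D + 2 * euler f2 y D = - dirac_l h y D.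
    by move=> Oy D; rewrite dirac_h //; ring.
  split; first exact: harmonic_almansi.
  split=> //; exact: (inframonogenic_iff_right_monogenic Oo
    (smooth_almansi Oo mono1 mono2 2%N) smooth_F F_dirac).
case: m h hom_h harm_h infra_h => [|m] h hom_h harm_h infra_h.
  exact: decomposition_dim0.
apply: homogeneous_decomposition_ex => //.
have : 1 <= INR k by apply: (le_INR 1); apply/leP.
by have := pos_INR m; rewrite S_INR; lra.
Qed.
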